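(* Let $H=(V,E)$ be an $n$-uniform hypergraph, $r\ge 2$, let $A\in E$ and let $2\le k\le r$. The number of sequences $(C_1,\dots,C_{k-1})$ of edges of $H$ for which there exist an injective $\sigma:V\to[0,1)$ and sets $V_i\subseteq\Delta_i$ ($i=1,\dots,r-1$) such that $(C_1,\dots,C_{k-1},A)$ is a $k$-complex ordered chain is at most $2\binom{|E|}{k-1}$.
   Context: Colors are $\{1,\dots,r\}$. Put $p=\frac{r-1}{r}\cdot\frac{\ln(n/\ln n)}{n}$. Partition $[0,1)$ into consecutive half-open intervals $\Delta_1,\delta_1,\Delta_2,\dots,\delta_{r-1},\Delta_r$ (left to right), $\Delta_i=\big[(i-1)(\tfrac{1-p}{r}+\tfrac{p}{r-1}),\ i\tfrac{1-p}{r}+(i-1)\tfrac{p}{r-1}\big)$, $\delta_i=\big[i\tfrac{1-p}{r}+(i-1)\tfrac{p}{r-1},\ i(\tfrac{1-p}{r}+\tfrac{p}{r-1})\big)$. For injective $\sigma:V\to[0,1)$, a vertex $v$ belongs to interval $I$ if $\sigma(v)\in I$ (and $\Delta_i$ also denotes the set of vertices belonging to it); the first (last) vertex of a vertex set is its vertex of smallest (largest) weight. Algorithm 1: every vertex in $\Delta_i$ gets color $i$; then vertices in $\bigcup_i\delta_i$ are processed in increasing weight order, and $v\in\delta_i$ gets color $i$ unless some edge containing $v$ has all its other vertices already colored $i$, in which case $v$ gets color $i+1$; the result is $C^0$. For $1\le k\le r$, a sequence $(C_1,\dots,C_{k-1},D)$ with $C_j$ edges and $D$ a nonempty vertex set satisfies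 the ordered $k$-chain conditions for color $r$ if: (a) the first vertex of $C_1$ (of $D$ if $k=1$) lies in $\Delta_{r-k+1}$; (b) for each $j=1,\dots,k-1$, with $C_k:=D$, the last vertex of $C_j$ equals the first vertex of $C_{j+1}$, lies in $\delta_{r-k+j}$, and all other vertices of $C_j$ have color $r-k+j$ in $C^0$; (c) all vertices of $D$ have color $r$ in $C^0$. Given sets $V_i\subseteq\Delta_i$, $i=1,\dots,r-1$, and $k\ge2$, a sequence $(C_1,\dots,C_{k-1},A)$ of edges is a $k$-complex ordered chain if, with $A'=A\cap(\delta_{r-1}\cup\Delta_r)$ (vertices of $A$ belonging to $\delta_{r-1}\cup\Delta_r$): (1) $(C_1,\dots,C_{k-1},A')$ satisfies the ordered $k$-chain conditions for color $r$; (2) every vertex of $A\setminus A'$ lies in $\bigcup_{i=1}^{r-1}V_i$; (3) for $j=1,\dots,k-2$, every vertex of $A\cap C_j$ lies in $V_{r-k+j}$; (4) every vertex of $(A\setminus A')\cap C_{k-1}$ lies in $V_{r-1}$. *)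

From mathcomp Require Import all_boot.
From Stdlib Require Import Reals.

Set Implicit Arguments.
Unset Strict Implicit.
Unset Printing Implicit Defensive.

Definition Rleb (x y : R) : bool := if Rle_dec x y then true else false.
Definition Rltb (x y : R) : bool := if Rlt_dec x y then true else false.
Definition in_int (a b x : R) : bool := Rleb a x && Rltb x b.

Section Algo.
Variables (V : finType) (E : {set {set V}}) (r n : nat) (sigma : V -> R).

Local Open Scope R_scope.
Definition pval : R :=
  ((INR r - 1) / INR r * (ln (INR n / ln (INR n)) / INR n))%R.
Definition aa : R := ((1 - pval) / INR r)%R.
Definition bb : R := (pval / (INR r - 1))%R.

Definition DeltaL (i : nat) : R := ((INR i - 1) * (aa + bb))%R.
Definition DeltaR (i : nat) : R := (INR i * aa + (INR i - 1) * bb)%R.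
Definition deltaL (i : nat) : R := DeltaR i.
Definition deltaR (i : nat) : R := (INR i * (aa + bb))%R.

Definition inDelta (i : nat) (v : V) : bool := in_int (DeltaL i) (DeltaR i) (sigma v).
Definition insmall (i : nat) (v : V) : bool := in_int (deltaL i) (deltaR i) (sigma v).

Local Close Scope R_scope.
Definition isSmall (v : V) : bool := has (fun i => insmall i v) (iota 1 (r - 1)).
Definition smallIdx (v : V) : nat := head 0 [seq i <- iota 1 (r - 1) | insmall i v].

(* Algorithm 1.  Colours are 1..r; 0 means "not (yet) coloured".
   Initially every vertex of Delta_i gets colour i. *)
Definition col_init (v : V) : nat := head 0 [seq i <- iota 1 r | inDelta i v].

Definition newcol (c : V -> nat) (v : V) : nat :=
  let i := smallIdx v in
  if [exists e in E, (v \in e) && [forall u in e, (u != v) ==> (c u == i)]]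
  then i.+1 else i.

Definition step (c : V -> nat) (v : V) : V -> nat :=
  fun u => if u == v then newcol c v else c u.

Definition small_order : seq V :=
  sort (fun u v => Rleb (sigma u) (sigma v)) [seq v <- enum V | isSmall v].

Definition C0 : V -> nat := foldl step col_init small_order.

Definition isFirst (S : {set V}) (v : V) : Prop :=
  v \in S /\ forall u, u \in S -> (sigma v <= sigma u)%R.
Definition isLast (S : {set V}) (v : V) : Prop :=
  v \in S /\ forall u, u \in S -> (sigma u <= sigma v)%R.

(* ordered k-chain conditions for colour r, for k >= 2:
   C j (j = 1..k-1) are the edges C_1..C_{k-1}, D is the final vertex set. *)
Definition ordered_chain (k : nat) (C : nat -> {set V}) (D : {set V}) : Prop :=
  let Cx := fun j => if j == k then D else C j in
  (D != set0) /\
  (exists v, isFirst (C 1) v /\ inDelta (r - k + 1) v) /\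
  (forall j, (1 <= j <= k - 1)%N ->
     exists v, isLast (Cx j) v /\ isFirst (Cx j.+1) v /\ insmall (r - k + j) v /\
       forall u, u \in Cx j -> u != v -> C0 u = (r - k + j)%N) /\
  (forall u, u \in D -> C0 u = r).

Definition Aprime (A : {set V}) : {set V} :=
  [set v in A | insmall (r - 1) v || inDelta r v].

Definition complex_chain (k : nat) (C : nat -> {set V}) (A : {set V})
  (Vs : nat -> {set V}) : Prop :=
  let A' := Aprime A in
  ordered_chain k C A' /\
  (forall v, v \in A :\: A' -> exists2 i, (1 <= i <= r - 1)%N & v \in Vs i) /\
  (forall j, (1 <= j <= k - 2)%N -> forall v, v \in A :&: C j -> v \in Vs (r - k + j)%N) /\
  (forall v, v \in (A :\: A') :&: C (k - 1) -> v \in Vs (r - 1)%N).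

End Algo.

From Pilot Require Import Defs.
From mathcomp Require Import all_boot zify.
From Stdlib Require Import Reals Lra Lia.

Set Implicit Arguments.
Unset Strict Implicit.
Unset Printing Implicit Defensive.

(* The edges C_1, ..., C_{k-1} of a chain form a linear path: C_j and C_{j+1}
   share their linking vertex, and as the linking vertices lie in the
   successive intervals delta_{r-k+1} < ... < delta_{r-1}, each edge lies
   entirely between the linking vertices at its ends, so non-consecutive edges
   are disjoint and all edges are distinct.  A linear path is determined by its
   set of edges together with its first edge, and the first edge must be one of
   the two ends of the path.  So each (k-1)-set of edges of H carries at most
   two chains. *)

Section LinearPath.
Variable T : finType.
Implicit Types s : seq {set T}.
Local Notation "s `_ i" := (nth set0 s i).

Definition linear_path s : Prop :=
  [/\ uniq s,
      forall i, i.+1 < size s -> s`_i :&: s`_i.+1 != set0 &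
      forall i j, i.+1 < j < size s -> s`_i :&: s`_j = set0].

Lemma linear_path_meet s i j :
  linear_path s -> i < j < size s -> s`_i :&: s`_j != set0 -> j = i.+1.
Proof.
case=> _ _ gap /andP[ij js] meet; apply/eqP; rewrite eqn_leq ij andbT.
by apply: contraNT meet; rewrite -ltnNge => ij'; rewrite gap ?ij' ?eqxx.
Qed.

Lemma linear_path_meet_head s y :
  linear_path s -> y \in s -> y != head set0 s -> head set0 s :&: y != set0 ->
  y = s`_1.
Proof.
move=> ps ys y_head meet; have sy := nth_index set0 ys.
have j_gt0 : 0 < index y s.
  by rewrite lt0n; apply: contraNneq y_head => j0; rewrite -sy j0 nth0.
have j1 : index y s = 1.
  by apply: (@linear_path_meet _ 0 _ ps); rewrite ?j_gt0 ?index_mem // nth0 sy.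
by rewrite -sy j1.
Qed.

Lemma linear_path_eq s s' :
  linear_path s -> linear_path s' -> s =i s' -> head set0 s = head set0 s' ->
  s = s'.
Proof.
move=> ps ps' ss' heads; have [uniq_s _ _] := ps; have [uniq_s' meet' _] := ps'.
have size_ss' : size s = size s' by apply/perm_size/uniq_perm.
apply: (eq_from_nth (x0 := set0) size_ss') => l; elim/ltn_ind: l => -[_|i IH ls].
  by rewrite !nth0 heads.
have ls' : i.+1 < size s' by rewrite -size_ss'.
set x := s'`_i.+1; have xs : x \in s by rewrite ss' mem_nth.
have sx := nth_index set0 xs; have x_lt : index x s < size s by rewrite index_mem.
have [x_early|x_late] := ltnP (index x s) i.+1.
  have : s'`_(index x s) == x by rewrite -(IH _ x_early x_lt) sx.
  by rewrite nth_uniq -?size_ss' // (ltn_eqF x_early).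
have meet : s`_i :&: s`_(index x s) != set0.
  by rewrite IH ?(ltn_trans _ ls) // sx; apply: meet'.
have x_idx : index x s = i.+1.
  by apply: linear_path_meet meet; rewrite // x_late.
by rewrite -{1}x_idx sx.
Qed.

Lemma linear_path_head_end s s' :
  linear_path s -> linear_path s' -> s =i s' ->
  head set0 s' \in [:: head set0 s; last set0 s].
Proof.
move=> ps ps' ss'; have [uniq_s meet _] := ps.
case: s' ps' ss' => [|x s'] ps' ss'.
  by case: s ss' {ps meet uniq_s} => [//|y s /(_ y)]; rewrite mem_head.
have xs : x \in s by rewrite ss' mem_head.
have sx := nth_index set0 xs; have x_lt : index x s < size s by rewrite index_mem.
set j := index x s in sx x_lt; clearbody j.
suff : (j == 0) || (j == (size s).-1).
  case/orP=> /eqP j_end.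
  - by rewrite /= -nth0 -sx j_end mem_head.
  - by rewrite /= -nth_last -sx j_end !inE eqxx orbT.
apply: contraT; rewrite negb_or -lt0n => /andP[j_gt0 j_last].
have js : j.+1 < size s by lia.
have j1s : j.-1 < size s by lia.
have neighbour i :
    i < size s -> i != j -> x :&: s`_i != set0 -> s`_i = (x :: s')`_1.
  move=> i_lt i_ne_j meet_i; apply: linear_path_meet_head => //.
    by rewrite -ss' mem_nth.
  by rewrite /= -sx nth_uniq.
have prev : x :&: s`_j.-1 != set0.
  by have := meet j.-1; rewrite prednK // sx setIC; apply.
have next : x :&: s`_j.+1 != set0 by rewrite -sx meet.
have prev_eq : s`_j.-1 = (x :: s')`_1 by apply: neighbour => //; lia.
have next_eq : s`_j.+1 = (x :: s')`_1 by apply: neighbour => //; lia.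
have := nth_uniq set0 j1s js uniq_s.
by rewrite prev_eq next_eq eqxx; lia.
Qed.

Lemma card_linear_path_fiber m (S : {set m.-tuple {set T}}) P :
  (forall t, t \in S -> linear_path t) ->
  #|[set t in S | [set x in t] == P]| <= 2.
Proof.
move=> paths; set F := [set t in S | _].
have [->|[t0 t0F]] := set_0Vmem F; first by rewrite cards0.
have inF t : t \in F -> linear_path t /\ t =i t0.
  move: t0F; rewrite !inE => /andP[_ /eqP <-] /andP[/paths pt /eqP /setP tt0].
  by split=> // x; have := tt0 x; rewrite !inE.
have head_inj : {in F &, injective (fun t : m.-tuple _ => head set0 t)}.
  move=> t1 t2 /inF[p1 e1] /inF[p2 e2] heads; apply: val_inj.
  by apply: linear_path_eq => // x; rewrite e1 e2.
rewrite -(card_in_imset head_inj).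
apply: leq_trans (_ : #|[set head set0 t0; last set0 t0]| <= 2); last first.
  by rewrite cards2; case: (_ != _).
apply/subset_leq_card/subsetP => _ /imsetP[t /inF[pt et] ->].
have [pt0 _] := inF t0 t0F.
have := linear_path_head_end pt0 pt (fun x => esym (et x)).
by rewrite !inE.
Qed.

Lemma card_linear_paths m (E : {set {set T}}) (S : {set m.-tuple {set T}}) :
  (forall t, t \in S -> linear_path t /\ {subset t <= E}) ->
  #|S| <= 2 * 'C(#|E|, m).
Proof.
move=> paths; pose edges (t : m.-tuple {set T}) := [set x in t].
have edges_draw :
    edges @: S \subset [set B : {set {set T}} | B \subset E & #|B| == m].
  apply/subsetP=> _ /imsetP[t /paths[[uniq_t _ _] tE] ->].
  rewrite inE cardsE (card_uniqP uniq_t) size_tuple eqxx andbT.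
  by apply/subsetP=> x; rewrite inE => /tE.
rewrite -cards_draws mulnC.
apply: leq_trans (leq_mul (subset_leq_card edges_draw) (leqnn 2)).
rewrite -sum1_card (partition_big edges (mem (edges @: S))) => [|t]; last first.
  exact: imset_f.
rewrite -sum_nat_const; apply: leq_sum => P _; rewrite sum1dep_card.
by apply: card_linear_path_fiber => t /paths[].
Qed.

Lemma linear_path_of_links s (sigma : T -> R) (band : nat -> T -> Prop) :
  (forall i j u v, i < j -> band i u -> band j v -> (sigma u < sigma v)%R) ->
  (forall i, i < size s -> exists2 w, band i w &
     isLast sigma s`_i w /\ (i.+1 < size s -> isFirst sigma s`_i.+1 w)) ->
  linear_path s.
Proof.
move=> band_lt links; split.
- apply/(uniqP set0) => i j; rewrite !inE => i_lt j_lt eq_ij.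
  wlog ij : i j i_lt j_lt eq_ij / i < j.
    move=> wl; case: (ltngtP i j) => [ij|ji|//]; first exact: wl.
    exact: esym (wl j i j_lt i_lt (esym eq_ij) ji).
  have [wi bi [[_ last_i] _]] := links i i_lt.
  have [wj bj [[wj_in _] _]] := links j j_lt.
  have := band_lt _ _ _ _ ij bi bj; have := last_i wj.
  by rewrite eq_ij => /(_ wj_in); lra.
- move=> i i1s; have [w _ [[wi _] /(_ i1s)[wi1 _]]] := links i (ltnW i1s).
  by apply/set0Pn; exists w; rewrite inE wi wi1.
- move=> i j /andP[ij js]; apply/setP => x; rewrite !inE; apply/negbTE/negP.
  case/andP=> xi xj; have j_gt0 : 0 < j by lia.
  have j1s : j.-1 < size s by lia.
  have i_lt : i < size s by lia.
  have [wi bi [[_ last_i] _]] := links i i_lt.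
  have [wj bj [_ first_j]] := links j.-1 j1s.
  rewrite prednK // in first_j; have [_ /(_ x xj)] := first_j js.
  have i_lt_j1 : i < j.-1 by lia.
  by have := band_lt _ _ _ _ i_lt_j1 bi bj; have := last_i x xi; lra.
Qed.

End LinearPath.

(* [Defs.] disambiguates from the [in_int] of Stdlib's Reals. *)
Lemma in_intP a b x : reflect (a <= x < b)%R (Defs.in_int a b x).
Proof.
rewrite /Defs.in_int /Rleb /Rltb.
by case: Rle_dec; case: Rlt_dec => /= *; constructor; lra.
Qed.

Section Intervals.
Variables (V : finType) (r n : nat) (sigma : V -> R).

Lemma inDelta_aa_gt0 i v : inDelta r n sigma i v -> (0 < aa r n)%R.
Proof. by move=> /in_intP; rewrite /DeltaL /DeltaR; nra. Qed.

Lemma insmall_sigma_lt i j u v : (0 <= aa r n)%R -> i < j ->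
  insmall r n sigma i u -> insmall r n sigma j v -> (sigma u < sigma v)%R.
Proof.
rewrite /insmall /deltaL /deltaR /DeltaR => a_ge0 ij /in_intP u_in /in_intP v_in.
have b_gt0 : (0 < bb r n)%R by nra.
have ij_R : (INR i + 1 <= INR j)%R by rewrite -S_INR; apply/le_INR/leP.
have := pos_INR i; nra.
Qed.

Lemma ordered_chain_linear_path (E : {set {set V}}) k (t : seq {set V}) D :
  size t = k.-1 -> ordered_chain E r n sigma k (fun j => nth set0 t j.-1) D ->
  linear_path t.
Proof.
move=> size_t [_ [[v0 [_ /inDelta_aa_gt0/Rlt_le a_ge0]] [links _]]].
apply: (linear_path_of_links (band := fun i => insmall r n sigma (r - k + i.+1))).
  by move=> i j u v ij; apply: insmall_sigma_lt; rewrite ?ltn_add2l.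
rewrite size_t => i ik; have k_gt0 : 0 < k by lia.
have [|w [last_w [first_w [small_w _]]]] := links i.+1; first by rewrite subn1.
exists w => //; split.
  by move: last_w; rewrite -(prednK k_gt0) ltn_eqF.
by move=> i1k; move: first_w; rewrite -(prednK k_gt0) ltn_eqF.
Qed.

End Intervals.

Theorem lemma6 (V : finType) (E : {set {set V}}) (n r k : nat) (A : {set V}) :
  (2 <= n)%N ->
  (forall e, e \in E -> #|e| = n) ->
  (2 <= r)%N ->
  A \in E ->
  (2 <= k <= r)%N ->
  forall S : {set (k.-1).-tuple {set V}},
    (forall t, t \in S ->
       (forall j : 'I_(k.-1), tnth t j \in E) /\
       exists sigma : V -> R,
         injective sigma /\
         (forall v, (0 <= sigma v < 1)%R) /\
         exists Vs : nat -> {set V},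
           (forall i, (1 <= i <= r - 1)%N ->
              forall v, v \in Vs i -> inDelta r n sigma i v) /\
           complex_chain E r n sigma k (fun j => nth set0 t j.-1) A Vs) ->
    (#|S| <= 2 * 'C(#|E|, k.-1))%N.
Proof.
move=> _ _ _ _ _ S chains.
apply: card_linear_paths => t /chains[edges [sigma [_ [_ [Vs [_ [chain _]]]]]]].
split; first exact: ordered_chain_linear_path (size_tuple t) chain.
by move=> x /tnthP[j ->].
Qed.
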